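(* Let $0\le a<b<1$ and $\lambda\ge 0$. Then $m(\lambda,a,b)\le\lambda+m(a,b)$, with equality if and only if $\lambda=0$.
   Context: $\zeta(t)=\frac{2}{1-t^2}$ and $\phi(t)=2\tanh^{-1}t$ on $[0,1)$. For a bounded function $\varrho\ge0$ on $[a,b]$ with $\varrho/\zeta$ non-decreasing, let $h$ be a primitive of $\varrho$, $\psi=e^h$, $\mathtt f(x)=x\zeta(x)^2\psi(x)$, $\mathtt g(x)=x\zeta(x)\psi(x)$, and $m(\varrho/\zeta,a,b):=\frac{\mathtt g(b)-\mathtt g(a)}{\int_a^b\mathtt f\,dt}$ (independent of the choice of primitive). $m(\lambda,a,b)$ denotes this quantity when $\varrho/\zeta\equiv\lambda$, i.e. $\varrho=\lambda\zeta$ (equivalently $\psi=e^{\lambda\phi}$ up to a constant factor), and $m(a,b):=m(0,a,b)=\frac{1+ab}{a+b}$. *)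

From Stdlib Require Import Reals.
Open Scope R_scope.

Definition zeta (t : R) : R := 2 / (1 - t ^ 2).
(* phi(t) = 2 artanh t = ln((1+t)/(1-t)) on [0,1) *)
Definition phi (t : R) : R := ln ((1 + t) / (1 - t)).
(* psi = e^{lambda * phi}, the case rho = lambda * zeta *)
Definition psi (lam t : R) : R := exp (lam * phi t).
Definition f_lam (lam x : R) : R := x * (zeta x) ^ 2 * psi lam x.
Definition g_lam (lam x : R) : R := x * zeta x * psi lam x.

(* m(lambda,a,b) = (g(b)-g(a)) / int_a^b f ; the integrability proof is a
   parameter (RiemannInt is proof-irrelevant in its value). *)
Definition m_lam (lam a b : R) (pr : Riemann_integrable (f_lam lam) a b) : R :=
  (g_lam lam b - g_lam lam a) / RiemannInt pr.

(* m(a,b) := m(0,a,b) = (1+ab)/(a+b) *)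
Definition m0 (a b : R) : R := (1 + a * b) / (a + b).

(** For [lam = 0] the weight [x zeta(x)^2] has the explicit primitive
    [m(a,b) (x zeta(x) - K(x))], where [K(x) = 2(x-a)(b-x)/((a+b)(1-x^2))]
    vanishes at both ends of [[a,b]].  Multiplying by [psi = exp (lam phi)]
    and using [phi' = zeta] shows that [psi (x zeta - K)], which agrees with
    [g] at [a] and [b], is a primitive of
    [(lam + m(a,b)) f - lam zeta psi K].  Hence
    [m(lam,a,b) = lam + m(a,b) - (int lam zeta psi K) / (int f)], and the
    subtracted ratio is nonnegative, vanishing exactly when [lam = 0]. *)

From Stdlib Require Import Reals Lra.
From Coquelicot Require Import Coquelicot.
Open Scope R_scope.

Definition kernel (a b x : R) : R :=
  2 * (x - a) * (b - x) / ((a + b) * (1 - x ^ 2)).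

Definition corrected_g0 (a b x : R) : R := x * zeta x - kernel a b x.

Definition corrected_g_lam (lam a b x : R) : R := psi lam x * corrected_g0 a b x.

Definition deficit (lam a b x : R) : R := lam * zeta x * psi lam x * kernel a b x.

Lemma one_sub_sqr_pos (x : R) : -1 < x < 1 -> 0 < 1 - x ^ 2.
Proof. intros; nra. Qed.

Lemma zeta_pos (x : R) : -1 < x < 1 -> 0 < zeta x.
Proof. intros Hx; apply Rdiv_lt_0_compat; [lra | now apply one_sub_sqr_pos]. Qed.

Lemma between_in_unit_interval (a b x : R) : -1 < a < 1 -> -1 < b < 1 ->
  Rmin a b <= x <= Rmax a b -> -1 < x < 1.
Proof. unfold Rmin, Rmax; destruct Rle_dec; lra. Qed.

Ltac open_interval_conditions x Hx :=
  pose proof (one_sub_sqr_pos x Hx);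
  repeat split;
  solve [ lra | apply Rdiv_lt_0_compat; lra
        | apply Rmult_integral_contrapositive; split; lra ].

Lemma is_derive_psi (lam x : R) : -1 < x < 1 ->
  is_derive (psi lam) x (lam * zeta x * psi lam x).
Proof.
  intros Hx; unfold psi, phi, zeta; auto_derive.
  - open_interval_conditions x Hx.
  - change ((1 + x) / (1 - x)) with ((1 + x) * / (1 + - x)).
    field; open_interval_conditions x Hx.
Qed.

Lemma is_derive_corrected_g0 (a b x : R) : a + b <> 0 -> -1 < x < 1 ->
  is_derive (corrected_g0 a b) x (m0 a b * x * zeta x ^ 2).
Proof.
  intros Hab Hx; unfold corrected_g0, kernel, zeta, m0; auto_derive.
  - open_interval_conditions x Hx.
  - field; open_interval_conditions x Hx.
Qed.

Lemma is_derive_corrected_g_lam (lam a b x : R) : a + b <> 0 -> -1 < x < 1 ->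
  is_derive (corrected_g_lam lam a b) x
    ((lam + m0 a b) * f_lam lam x - deficit lam a b x).
Proof.
  intros Hab Hx.
  replace ((lam + m0 a b) * f_lam lam x - deficit lam a b x) with
    (lam * zeta x * psi lam x * corrected_g0 a b x
     + psi lam x * (m0 a b * x * zeta x ^ 2))
    by (unfold f_lam, deficit, corrected_g0; ring).
  unfold corrected_g_lam.
  apply Derive.is_derive_mult; [now apply is_derive_psi | now apply is_derive_corrected_g0].
Qed.

Lemma corrected_g_lam_left (lam a b : R) : corrected_g_lam lam a b a = g_lam lam a.
Proof. unfold corrected_g_lam, corrected_g0, kernel, g_lam, Rdiv; ring. Qed.

Lemma corrected_g_lam_right (lam a b : R) : corrected_g_lam lam a b b = g_lam lam b.
Proof. unfold corrected_g_lam, corrected_g0, kernel, g_lam, Rdiv; ring. Qed.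

Lemma continuous_f_lam (lam x : R) : -1 < x < 1 -> continuous (f_lam lam) x.
Proof.
  intros Hx; apply (ex_derive_continuous (V := R_NormedModule)).
  unfold f_lam, psi, phi, zeta; auto_derive; open_interval_conditions x Hx.
Qed.

Lemma continuous_deficit (lam a b x : R) : a + b <> 0 -> -1 < x < 1 ->
  continuous (deficit lam a b) x.
Proof.
  intros Hab Hx; apply (ex_derive_continuous (V := R_NormedModule)).
  unfold deficit, kernel, psi, phi, zeta; auto_derive; open_interval_conditions x Hx.
Qed.

Lemma RInt_deficit_identity (lam a b : R) :
  -1 < a < 1 -> -1 < b < 1 -> a + b <> 0 ->
  (lam + m0 a b) * RInt (f_lam lam) a b - RInt (deficit lam a b) a b
  = g_lam lam b - g_lam lam a.
Proof.
  intros Ha Hb Hab.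
  assert (Hf : ex_RInt (f_lam lam) a b).
  { apply (ex_RInt_continuous (V := R_CompleteNormedModule)); intros x Hx.
    apply continuous_f_lam; exact (between_in_unit_interval a b x Ha Hb Hx). }
  assert (Hw : ex_RInt (deficit lam a b) a b).
  { apply (ex_RInt_continuous (V := R_CompleteNormedModule)); intros x Hx.
    apply continuous_deficit; [exact Hab | exact (between_in_unit_interval a b x Ha Hb Hx)]. }
  assert (FTC : is_RInt (fun x => (lam + m0 a b) * f_lam lam x - deficit lam a b x) a b
                  (corrected_g_lam lam a b b - corrected_g_lam lam a b a)).
  { apply (is_RInt_derive (V := R_CompleteNormedModule)); intros x Hx;
      pose proof (between_in_unit_interval a b x Ha Hb Hx).
    - now apply is_derive_corrected_g_lam.
    - apply (continuous_minus (V := R_NormedModule)).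
      + apply (continuous_scal_r (K := R_AbsRing) (V := R_NormedModule)).
        now apply continuous_f_lam.
      + now apply continuous_deficit. }
  rewrite <- (corrected_g_lam_left lam a b), <- (corrected_g_lam_right lam a b).
  transitivity
    (RInt (fun x => minus (scal (lam + m0 a b) (f_lam lam x)) (deficit lam a b x)) a b).
  - rewrite (RInt_minus (V := R_CompleteNormedModule)),
            (RInt_scal (V := R_CompleteNormedModule)); [reflexivity | exact Hf | | exact Hw].
    now apply (ex_RInt_scal (V := R_NormedModule)).
  - exact (is_RInt_unique _ _ _ _ FTC).
Qed.

Lemma m_lam_eq_deficit (lam a b : R) (pr : Riemann_integrable (f_lam lam) a b) :
  -1 < a < 1 -> -1 < b < 1 -> a + b <> 0 -> RInt (f_lam lam) a b <> 0 ->
  m_lam lam a b pr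
  = lam + m0 a b - RInt (deficit lam a b) a b / RInt (f_lam lam) a b.
Proof.
  intros Ha Hb Hab Hf.
  unfold m_lam; rewrite <- (RInt_Reals _ _ _ pr), <- (RInt_deficit_identity lam a b Ha Hb Hab).
  field; exact Hf.
Qed.

Lemma f_lam_pos (lam x : R) : 0 < x < 1 -> 0 < f_lam lam x.
Proof.
  intros Hx; unfold f_lam, psi.
  assert (0 < zeta x) by (apply zeta_pos; lra).
  apply Rmult_lt_0_compat; [apply Rmult_lt_0_compat; [lra | now apply pow_lt] | apply exp_pos].
Qed.

Lemma kernel_pos (a b x : R) : 0 < a + b -> a < x < b -> -1 < x < 1 -> 0 < kernel a b x.
Proof.
  intros Hab Hx Hx1; unfold kernel.
  pose proof (one_sub_sqr_pos x Hx1).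
  apply Rdiv_lt_0_compat; [| apply Rmult_lt_0_compat]; nra.
Qed.

Lemma deficit_pos (lam a b x : R) : 0 < lam -> 0 < a + b -> a < x < b -> -1 < x < 1 ->
  0 < deficit lam a b x.
Proof.
  intros Hlam Hab Hx Hx1; unfold deficit, psi.
  apply Rmult_lt_0_compat; [apply Rmult_lt_0_compat; [apply Rmult_lt_0_compat |] |].
  - exact Hlam.
  - exact (zeta_pos x Hx1).
  - apply exp_pos.
  - exact (kernel_pos a b x Hab Hx Hx1).
Qed.

Lemma RInt_f_lam_pos (lam a b : R) : 0 <= a -> a < b -> b < 1 -> 0 < RInt (f_lam lam) a b.
Proof.
  intros Ha Hab Hb; apply RInt_gt_0; [exact Hab | |]; intros x Hx.
  - apply f_lam_pos; lra.
  - apply continuous_f_lam; lra.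
Qed.

Lemma RInt_deficit_pos (lam a b : R) : 0 < lam -> 0 <= a -> a < b -> b < 1 ->
  0 < RInt (deficit lam a b) a b.
Proof.
  intros Hlam Ha Hab Hb; apply RInt_gt_0; [exact Hab | |]; intros x Hx.
  - apply deficit_pos; lra.
  - apply continuous_deficit; lra.
Qed.

Lemma RInt_deficit_0 (a b : R) : RInt (deficit 0 a b) a b = 0.
Proof.
  rewrite (RInt_ext (V := R_CompleteNormedModule) _ (fun _ => 0)).
  - rewrite RInt_const; apply (scal_zero_r (K := R_AbsRing) (V := R_NormedModule)).
  - intros x _; change (0 * zeta x * psi 0 x * kernel a b x = 0); ring.
Qed.

Theorem mainTheorem8 (a b lam : R) (pr : Riemann_integrable (f_lam lam) a b) :
  0 <= a -> a < b -> b < 1 -> 0 <= lam ->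
  m_lam lam a b pr <= lam + m0 a b /\
  (m_lam lam a b pr = lam + m0 a b <-> lam = 0).
Proof.
  intros Ha Hab Hb Hlam.
  pose proof (RInt_f_lam_pos lam a b Ha Hab Hb) as Hf.
  rewrite (m_lam_eq_deficit lam a b pr) by lra.
  destruct (Rle_lt_or_eq_dec 0 lam Hlam) as [Hpos | <-].
  - assert (0 < RInt (deficit lam a b) a b / RInt (f_lam lam) a b)
      by (apply Rdiv_lt_0_compat; [now apply RInt_deficit_pos | exact Hf]).
    split; [lra | split; intros; lra].
  - rewrite RInt_deficit_0; unfold Rdiv; rewrite Rmult_0_l, Rminus_0_r.
    split; [apply Rle_refl | tauto].
Qed.
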